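(* Let $n\le m$ and let $W\in\mathbb{R}^{n\times m}$ have full row rank $n$. Let $r\ge 1$ be an integer with $2r\le n$. Define the rank capacity of a parameterized adapter $f_\theta(W)$ by $$\mathcal{R}(f_\theta;W):=\max_{\theta}\operatorname{rank}(f_\theta(W))-\min_{\theta}\operatorname{rank}(f_\theta(W)).$$ Consider: (i) the rank-$r$ LoRA adapter $f_{\{A,B\}}(W)=W+AB^T$, where $A\in\mathbb{R}^{n\times r}$ and $B\in\mathbb{R}^{m\times r}$ range over all real matrices; (ii) the rank-$r$ additive spectral adapter: fix a singular value decomposition $W=USV^T$ with $U\in\mathbb{R}^{n\times n}$, $V\in\mathbb{R}^{m\times m}$ orthogonal and $S\in\mathbb{R}^{n\times m}$ rectangular diagonal with the singular values in nonincreasing order; write $U=[U_1\ U_2]$, $V=[V_1\ V_2]$ with $U_1\in\mathbb{R}^{n\times r}$, $V_1\in\mathbb{R}^{m\times r}$ the first $r$ columns; and set $f_{\{A_U,A_V\}}(W)=[U_1+A_U\ \ U_2]\,S\,[V_1+A_V\ \ V_2]^T$, where $A_U\in\mathbb{R}^{n\times r}$ and $A_V\in\mathbb{R}^{m\times r}$ range over all real matrices. Both adapters have $r(n+m)$ trainable parameters, and $$\mathcal{R}(\mathrm{LoRA};W)=r,\qquad \mathcal{R}(\mathrm{Spectral\ Adapter}^A;W)=2r.$$ *)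

From HB Require Import structures.
From mathcomp Require Import all_boot all_order all_algebra.
From mathcomp Require Import reals.
Set Implicit Arguments. Unset Strict Implicit. Unset Printing Implicit Defensive.
Import Order.TTheory GRing.Theory Num.Theory.
Local Open Scope ring_scope.

Definition rank_capacity (R : fieldType) (T : Type) (n m : nat)
  (f : T -> 'M[R]_(n, m)) (c : nat) : Prop :=
  exists t1 t2 : T,
    (forall t, (\rank (f t) <= \rank (f t1))%N) /\
    (forall t, (\rank (f t2) <= \rank (f t))%N) /\
    c = (\rank (f t1) - \rank (f t2))%N.

Definition is_svd (R : realType) (n m : nat) (W : 'M[R]_(n, m))
  (U : 'M[R]_n) (S : 'M[R]_(n, m)) (V : 'M[R]_m) : Prop :=
  [/\ U *m U^T = 1%:M /\ U^T *m U = 1%:M,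
      V *m V^T = 1%:M /\ V^T *m V = 1%:M,
      (forall (i : 'I_n) (j : 'I_m), (i : nat) <> j -> S i j = 0),
      (forall (i : 'I_n) (j : 'I_m), (i : nat) = j -> 0 <= S i j) /\
      (forall (i i' : 'I_n) (j j' : 'I_m), (i : nat) = j -> (i' : nat) = j' ->
          (i <= i')%N -> S i' j' <= S i j)
    & W = U *m S *m V^T].

(* Zero-padding of an n x r matrix A to the n x k matrix [A 0]
   (first r columns are A, the remaining ones are 0), for r <= k. *)
Definition padc (R : fieldType) (n r k : nat) (A : 'M[R]_(n, r)) : 'M[R]_(n, k) :=
  A *m pid_mx r.

Definition lora (R : fieldType) (n m r : nat) (W : 'M[R]_(n, m))
  (theta : 'M[R]_(n, r) * 'M[R]_(m, r)) : 'M[R]_(n, m) :=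
  W + theta.1 *m theta.2^T.

(* Additive spectral adapter: theta = (A_U, A_V),
   f(W) = [U1 + A_U, U2] S [V1 + A_V, V2]^T
        = (U + [A_U 0]) S (V + [A_V 0])^T. *)
Definition spectral (R : fieldType) (n m r : nat) (U : 'M[R]_n)
  (S : 'M[R]_(n, m)) (V : 'M[R]_m)
  (theta : 'M[R]_(n, r) * 'M[R]_(m, r)) : 'M[R]_(n, m) :=
  (U + padc n theta.1) *m S *m (V + padc m theta.2)^T.

Arguments padc {R n r} k A.
Arguments lora {R n m} r W theta.
Arguments spectral {R n m} r U S V theta.
Arguments rank_capacity {R T n m} f c.
Arguments is_svd {R n m} W U S V.

(* Each adapter perturbs W by a matrix of rank at most r (LoRA) or 2r (the
   spectral adapter, whose perturbation P S (V + Q)^T + U S Q^T has two terms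
   factoring through the padded r-column parameters), so no rank drops by more,
   while theta = 0 keeps the full rank n.  The lower bounds are attained: for
   LoRA by A B^T = - pid_mx r W, which erases r rows of W; for the spectral
   adapter by replacing the first r columns of U and V so that the product
   becomes U X S Y^T V^T where X S Y^T vanishes on its first 2r rows.  That
   construction divides by the first r singular values, which are nonzero as
   W has full row rank; only the diagonal shape of S is used, not the sign or
   order of its entries. *)
From HB Require Import structures.
From mathcomp Require Import all_boot all_order all_algebra.
From mathcomp Require Import reals.
From mathcomp Require Import zify.
Set Implicit Arguments.
Unset Strict Implicit.
Unset Printing Implicit Defensive.
Import Order.TTheory GRing.Theory Num.Theory.
Local Open Scope ring_scope.

Lemma rank_capacity_intro (F : fieldType) (T : Type) (n m c : nat)
    (f : T -> 'M[F]_(n, m)) (t1 t2 : T) :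
  (forall t, (\rank (f t) <= \rank (f t1))%N) ->
  (forall t, (\rank (f t1) <= \rank (f t) + c)%N) ->
  (\rank (f t2) + c <= \rank (f t1))%N ->
  rank_capacity f c.
Proof.
move=> max_t1 low_t1 t2_low; exists t1, t2; split; [by []|split].
- by move=> t; rewrite -(leq_add2r c); apply: leq_trans t2_low (low_t1 t).
- by have := low_t1 t2; lia.
Qed.

Section RankBounds.
Variable F : fieldType.

Lemma mxrank_le_sub m n (A B : 'M[F]_(m, n)) :
  (\rank B <= \rank A + \rank (A - B)%R)%N.
Proof.
rewrite -(mxrank_opp (A - B)%R); apply: leq_trans (mxrank_add _ _).
by rewrite opprB addrC subrK.
Qed.

Lemma pid_mx_mulmxE n p k (M : 'M[F]_(n, p)) i j :
  (pid_mx k *m M) i j = (i < k)%:R * M i j.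
Proof.
rewrite mxE (bigD1 i) //= big1 ?addr0; first by rewrite mxE eqxx.
by move=> l; rewrite mxE eq_sym -val_eqE => /negbTE->; rewrite mul0r.
Qed.

Lemma mulmx_pid_mxE n p k (M : 'M[F]_(n, p)) i j :
  (M *m pid_mx k) i j = (j < k)%:R * M i j.
Proof.
by rewrite -[M *m _]trmxK trmx_mul tr_pid_mx [in LHS]mxE pid_mx_mulmxE mxE.
Qed.

Lemma mxrank_top_rows0 n p k (M : 'M[F]_(n, p)) :
  (k <= n)%N -> (forall (i : 'I_n) j, (i < k)%N -> M i j = 0) ->
  (\rank M <= n - k)%N.
Proof.
move=> le_kn top0; rewrite -(rank_copid_mx F le_kn).
have -> : M = copid_mx k *m M.
  apply/matrixP => i j; rewrite mulmxBl mul1mx [in RHS]mxE.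
  rewrite [(- (_ *m _)) i j]mxE pid_mx_mulmxE.
  by case: ltnP => [/top0->|_]; rewrite ?mul1r ?mul0r ?subrr ?subr0.
exact: mxrankM_maxl.
Qed.

End RankBounds.

Section Adapters.
Variables (F : fieldType) (n m r : nat).

Lemma mxrank_padc p k (A : 'M[F]_(p, r)) : (\rank (padc k A) <= r)%N.
Proof. exact: leq_trans (mxrankM_maxl _ _) (rank_leq_col _). Qed.

Lemma padc_mulmx_pid p k (A : 'M[F]_(p, k)) :
  padc k (A *m (pid_mx r : 'M_(k, r))) = A *m pid_mx r.
Proof. by rewrite /padc -mulmxA mul_pid_mx !minnn. Qed.

Lemma lora_rank_capacity (W : 'M[F]_(n, m)) :
  \rank W = n -> (r <= n)%N -> rank_capacity (lora r W) r.
Proof.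
move=> W_full le_rn.
pose t2 := (- pid_mx r, W^T *m pid_mx r) : 'M[F]_(n, r) * 'M[F]_(m, r).
have lora0 : lora r W (0, 0) = W by rewrite /lora mul0mx addr0.
have lora_t2 : lora r W t2 = copid_mx r *m W.
  by rewrite /lora /= trmx_mul trmxK tr_pid_mx mulNmx mulmxA pid_mx_id //
    mulmxBl mul1mx.
apply: (rank_capacity_intro (t1 := (0, 0)) (t2 := t2)); rewrite lora0.
- by move=> t; rewrite W_full rank_leq_row.
- move=> [A B]; apply: leq_trans (mxrank_le_sub (lora r W (A, B)) W) _.
  rewrite leq_add2l /lora addrC addKr.
  exact: leq_trans (mxrankM_maxl _ _) (rank_leq_col _).
- rewrite lora_t2 W_full; have := mxrankM_maxl (copid_mx r) W.
  by rewrite rank_copid_mx // addnC -leq_subRL.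
Qed.

Variables (U : 'M[F]_n) (S : 'M[F]_(n, m)) (V : 'M[F]_m).

Lemma spectral_subE (A : 'M[F]_(n, r)) (B : 'M[F]_(m, r)) :
  spectral r U S V (A, B) - U *m S *m V^T =
  padc n A *m S *m (V + padc m B)^T + U *m S *m (padc m B)^T.
Proof.
rewrite /spectral /= raddfD !mulmxDl !mulmxDr addrAC.
by rewrite [U *m S *m V^T + _]addrC addrK addrC.
Qed.

Lemma mxrank_spectral_ge (A : 'M[F]_(n, r)) (B : 'M[F]_(m, r)) :
  (\rank (U *m S *m V^T) <= \rank (spectral r U S V (A, B)) + 2 * r)%N.
Proof.
apply: leq_trans (mxrank_le_sub (spectral r U S V (A, B)) _) _.
rewrite leq_add2l spectral_subE mul2n -addnn.
apply: leq_trans (mxrank_add _ _) (leq_add _ _).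
  rewrite (leq_trans (mxrankM_maxl _ _)) //.
  exact: leq_trans (mxrankM_maxl _ _) (mxrank_padc _ _).
by rewrite (leq_trans (mxrankM_maxr _ _)) // mxrank_tr mxrank_padc.
Qed.

Lemma spectral_update (X : 'M[F]_n) (Y : 'M[F]_m) :
  (X - 1) *m pid_mx r = X - 1 -> (Y - 1) *m pid_mx r = Y - 1 ->
  spectral r U S V (U *m (X - 1) *m pid_mx r, V *m (Y - 1) *m pid_mx r) =
  U *m (X *m S *m Y^T) *m V^T.
Proof.
move=> X_upd Y_upd; rewrite /spectral /= !padc_mulmx_pid -!mulmxA X_upd Y_upd.
rewrite !mulmxBr !mulmx1 ![_ + (_ - _)]addrC !subrK trmx_mul.
by rewrite !mulmxA.
Qed.
End Adapters.

Section DiagonalWitness.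
Variables (F : fieldType) (n m r : nat) (le_nm : (n <= m)%N) (S : 'M[F]_(n, m)).
Hypothesis S_diag : forall (i : 'I_n) (j : 'I_m), (i : nat) <> j -> S i j = 0.

Let d (i : 'I_n) : F := S i (widen_ord le_nm i).

Lemma diag_neq0 i : row_free S -> d i != 0.
Proof.
move=> S_free; apply: contraTneq S_free => dii0; apply/row_freePn; exists i.
suff -> : row i S = 0 by apply: sub0mx.
apply/rowP => j; rewrite !mxE.
have [->|/eqP ne_ji] := eqVneq j (widen_ord le_nm i); first by [].
by apply: S_diag => eq_ij; apply: ne_ji; apply: val_inj.
Qed.

Lemma diag_mulmxE p (B : 'M[F]_(m, p)) i k :
  (S *m B) i k = d i * B (widen_ord le_nm i) k.
Proof.
rewrite mxE (bigD1 (widen_ord le_nm i)) //= big1 ?addr0 // => j ne_ji.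
by rewrite S_diag ?mul0r // => eq_ij; move/eqP: ne_ji; apply; apply: val_inj.
Qed.

(* Column j < r of witnessU is -(d_{j+r} / d_j) e_{j+r} and that of witnessV
   is e_{j+r}, so in witnessU S witnessV^T the rank-one term coming from d_j
   cancels the one of d_{j+r}. *)
Definition witnessU : 'M[F]_n := \matrix_(i < n, j < n)
  if (j < r)%N then (if (i : nat) == (j + r)%N then - (d i / d j) else 0)
  else (i == j)%:R.

Definition witnessV : 'M[F]_m := \matrix_(k < m, j < m)
  if (j < r)%N then ((k : nat) == (j + r)%N)%:R else (k == j)%:R.

Lemma witnessU_update : (witnessU - 1) *m pid_mx r = witnessU - 1.
Proof.
apply/matrixP => i j; rewrite mulmx_pid_mxE; case: ltnP => [_|le_rj].
  by rewrite mul1r.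
by rewrite mul0r !mxE ltnNge le_rj subrr.
Qed.

Lemma witnessV_update : (witnessV - 1) *m pid_mx r = witnessV - 1.
Proof.
apply/matrixP => i j; rewrite mulmx_pid_mxE; case: ltnP => [_|le_rj].
  by rewrite mul1r.
by rewrite mul0r !mxE ltnNge le_rj subrr.
Qed.

Lemma witness_top_rows0 (i : 'I_n) (k : 'I_m) :
  row_free S -> (i < 2 * r)%N -> (witnessU *m S *m witnessV^T) i k = 0.
Proof.
move=> S_free lt_i2r; rewrite -mulmxA mxE.
under eq_bigr => l _ do rewrite diag_mulmxE mxE.
have [lt_ir|le_ri] := ltnP i r.
  apply: big1 => l _; rewrite mxE; case: (ltnP l r) => l_r.
    by rewrite ifN ?mul0r //; apply/eqP; lia.
  have /negbTE-> : i != l by rewrite -val_eqE /=; apply/eqP; lia.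
  by rewrite mul0r.
pose l0 : 'I_n := Ordinal (leq_ltn_trans (leq_subr r i) (ltn_ord i)).
have l0_neq_i : l0 != i by rewrite -val_eqE /=; apply/eqP; lia.
rewrite (bigD1 l0) // (bigD1 i) /=; last by rewrite eq_sym.
rewrite big1 ?addr0; last first.
  move=> l /andP[ne_l_l0 ne_l_i]; rewrite mxE.
  move: ne_l_l0 ne_l_i; rewrite -!val_eqE /= => /eqP ne_l_l0 /eqP ne_l_i.
  case: (ltnP l r) => l_r; first by rewrite ifN ?mul0r //; apply/eqP; lia.
  have /negbTE-> : (i : nat) != l by apply/eqP; lia.
  by rewrite mul0r.
have lt_l0r : (i - r < r)%N by lia.
rewrite !mxE /= lt_l0r ltnNge le_ri subnK // !eqxx /=.
rewrite mulrA mulNr divfK; last exact: diag_neq0.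
by rewrite mul1r -[k == widen_ord _ _]val_eqE /= mulNr addNr.
Qed.

Lemma spectral_rank_capacity (U : 'M[F]_n) (V : 'M[F]_m) :
  \rank (U *m S *m V^T) = n -> (2 * r <= n)%N ->
  rank_capacity (spectral r U S V) (2 * r).
Proof.
move=> USV_full le_2r_n.
have S_free : row_free S.
  by rewrite -row_leq_rank -{1}USV_full (leq_trans (mxrankM_maxl _ _))
    ?mxrankM_maxr.
pose t2 : 'M[F]_(n, r) * 'M[F]_(m, r) :=
  (U *m (witnessU - 1) *m pid_mx r, V *m (witnessV - 1) *m pid_mx r).
have spectral0 : spectral r U S V (0, 0) = U *m S *m V^T.
  by rewrite /spectral /padc !mul0mx !addr0.
have spectral_t2 : (\rank (spectral r U S V t2) <= n - 2 * r)%N.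
  rewrite spectral_update ?witnessU_update ?witnessV_update //.
  apply: leq_trans (mxrankM_maxl _ _) (leq_trans (mxrankM_maxr _ _) _).
  by apply: (mxrank_top_rows0 le_2r_n) => i k; apply: witness_top_rows0.
apply: (rank_capacity_intro (t2 := t2) (t1 := (0, 0))); rewrite spectral0.
- by move=> t; rewrite USV_full rank_leq_row.
- by move=> [A B]; apply: mxrank_spectral_ge.
- by rewrite USV_full addnC -leq_subRL.
Qed.

End DiagonalWitness.

Theorem lemma3p1 (R : realType) (n m r : nat) (W : 'M[R]_(n, m))
  (U : 'M[R]_n) (S : 'M[R]_(n, m)) (V : 'M[R]_m) :
  (n <= m)%N -> \rank W = n -> (1 <= r)%N -> (2 * r <= n)%N ->
  is_svd W U S V ->
  rank_capacity (lora r W) r /\ rank_capacity (spectral r U S V) (2 * r).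
Proof.
move=> le_nm W_full _ le_2r_n [_ _ S_diag _ W_svd]; split.
  by apply: lora_rank_capacity W_full _; lia.
by apply: (spectral_rank_capacity le_nm S_diag); rewrite -?W_svd.
Qed.
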